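(* Let $R\in\operatorname{Ob}(\hat{\mathcal C})$, $G=\mathrm{SL}_2(R)$, $\bar\rho:G\to\mathrm{GL}_2(k)$ induced by reduction, and $S\in\operatorname{Ob}(\hat{\mathcal C})$. For $a\in\mu_R$ let $a_S\in\mu_S$ be the unique element of $\mu_S$ with the same image in $k$ as $a$. Then every deformation of $\bar\rho$ to $S$ has a representative $\rho$ with $\rho\big(\mathrm{diag}(a,a^{-1})\big)=\mathrm{diag}(a_S,a_S^{-1})$ for all $a\in\mu_R$.
   Context: Let $k$ be a finite field. $\hat{\mathcal C}$ is the category of complete noetherian local commutative rings with residue field $k$, with local homomorphisms inducing the identity on $k$; $\mathfrak m_S$ is the maximal ideal of $S$. For $S\in\hat{\mathcal C}$, $\mu_S=\{x\in S: x^{\#k-1}=1\}$ (the Teichmüller lifts of $k^\times$), which maps bijectively onto $k^\times$. For a profinite group $G$ and continuous $\bar\rho:G\to\mathrm{GL}_n(k)$, a lift to $S$ is a continuous $\rho:G\to\mathrm{GL}_n(S)$ reducing to $\bar\rho$; lifts are strictly equivalent if conjugate by an element of $I+M_n(\mathfrak m_S)$; a deformation is a strict equivalence class. *)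

From HB Require Import structures.
From mathcomp Require Import all_boot all_order all_algebra all_field.
Set Implicit Arguments. Unset Strict Implicit. Unset Printing Implicit Defensive.
Import GRing.Theory.
Local Open Scope ring_scope.

Definition is_ideal (R : comUnitRingType) (I : R -> Prop) :=
  I 0 /\ (forall x y, I x -> I y -> I (x + y)) /\ (forall r x, I x -> I (r * x)).

Definition fin_gen (R : comUnitRingType) (I : R -> Prop) :=
  exists n (g : 'I_n -> R), forall x,
    I x <-> exists c : 'I_n -> R, x = \sum_(i < n) c i * g i.

Definition noetherian (R : comUnitRingType) :=
  forall I : R -> Prop, is_ideal I -> fin_gen I.

Fixpoint ideal_pow (R : comUnitRingType) (I : R -> Prop) (n : nat) : R -> Prop :=
  match n with
  | 0 => fun _ => True
  | n'.+1 => fun x => exists s : seq (R * R),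
      (forall p, p \in s -> I p.1 /\ ideal_pow I n' p.2) /\
      x = \sum_(p <- s) p.1 * p.2
  end.

Definition maxid (R : comUnitRingType) (k : fieldType) (pi : {rmorphism R -> k})
  (x : R) : Prop := pi x = 0.

(* pi : R -> k surjective, and R local with maximal ideal ker pi. *)
Definition local_residue (R : comUnitRingType) (k : fieldType)
  (pi : {rmorphism R -> k}) :=
  (forall y, exists x, pi x = y) /\ (forall x, pi x != 0 -> x \is a GRing.unit).

Definition adic_complete (R : comUnitRingType) (I : R -> Prop) :=
  (forall x, (forall n, ideal_pow I n x) -> x = 0) /\
  (forall u : nat -> R,
     (forall n, exists N, forall i j, (N <= i)%N -> (N <= j)%N ->
          ideal_pow I n (u i - u j)) ->
     exists l, forall n, exists N, forall i, (N <= i)%N -> ideal_pow I n (u i - l)).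

Definition in_hatC (k : finFieldType) (R : comUnitRingType) (pi : {rmorphism R -> k}) :=
  local_residue pi /\ noetherian R /\ adic_complete (maxid pi).

Definition SL2 (R : comUnitRingType) (A : 'M[R]_2) : Prop := \det A = 1.

Definition congr_id (R : comUnitRingType) (I : R -> Prop) (A : 'M[R]_2) : Prop :=
  forall i j, I (A i j - (1%:M : 'M[R]_2) i j).

(* Continuity is stated at the identity (enough for homomorphisms) w.r.t. the
   bases of neighbourhoods given by the principal congruence subgroups. *)
Definition is_lift (k : finFieldType) (R S : comUnitRingType)
  (piR : {rmorphism R -> k}) (piS : {rmorphism S -> k})
  (rho : 'M[R]_2 -> 'M[S]_2) :=
  (forall A B, SL2 A -> SL2 B -> rho (A *m B) = rho A *m rho B) /\
  (forall A, SL2 A -> rho A \in unitmx) /\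
  (forall A, SL2 A -> map_mx piS (rho A) = map_mx piR A) /\
  (forall n, exists N, forall A, SL2 A ->
      congr_id (ideal_pow (maxid piR) N) A ->
      congr_id (ideal_pow (maxid piS) n) (rho A)).

Definition strictly_equiv (k : finFieldType) (R S : comUnitRingType)
  (piS : {rmorphism S -> k}) (rho rho' : 'M[R]_2 -> 'M[S]_2) :=
  exists C : 'M[S]_2, congr_id (maxid piS) C /\
    forall A, SL2 A -> rho' A = C *m rho A *m invmx C.

Definition mu (T : comUnitRingType) (q : nat) (x : T) : Prop := x ^+ q.-1 = 1.

Definition diag2 (T : comUnitRingType) (a b : T) : 'M[T]_2 :=
  \matrix_(i < 2, j < 2)
     (if i == j then (if (i : nat) == 0%N then a else b) else 0).

From HB Require Import structures.
From mathcomp Require Import all_boot all_order all_algebra all_field.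
From Stdlib Require Import Classical.
Import GRing.Theory.
Local Open Scope ring_scope.

(* Let n = #k - 1; it is invertible in k (it equals -1 there).  For a in mu_R
   the matrix M = rho(diag(a, a^-1)) satisfies M^n = 1 and reduces to
   diag(a_bar, a_bar^-1).  Since n is a unit of S, the averaged projectors
   (1/n) sum_j (s^-1 M)^j onto the s-eigenspaces of M lift the standard basis
   of k^2, giving P = 1 mod m_S with M P = P diag(b, b^-1).  Roots of unity of
   order n in S are determined by their residues (Teichmueller uniqueness).
   - If some a0 has a_bar0 <> a_bar0^-1, conjugating by P0^-1 makes rho(t(a0))
     diagonal with distinct residues on the diagonal; all rho(t(a)) commute
     with it, hence become diagonal, and uniqueness identifies their entries.
   - Otherwise every b_bar = b_bar^-1, so rho(t(a)) is conjugate to the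
     scalar b, hence equal to it, and no conjugation is needed.
   Conjugating a lift by C = 1 mod m_S gives a strictly equivalent lift. *)

Set Implicit Arguments. Unset Strict Implicit.

(* In a finite ring, #R = 0: translating by 1 permutes R, so summing all
   elements gives sum x = #R + sum x. *)
Lemma card_finRing_nat (F : finNzRingType) : (#|F|%:R : F) = 0.
Proof.
have : \sum_(x : F) x = \sum_(x : F) (1 + x) := reindex_inj (addrI 1).
rewrite big_split /= sumr_const => /(congr1 (fun y => y - \sum_(x : F) x)).
by rewrite addrK subrr.
Qed.

(* Hence #R - 1 = -1 is a unit: the order of mu is invertible in k. *)
Lemma card_pred_finRing_nat (F : finNzRingType) : ((#|F|.-1)%:R : F) = -1.
Proof.
have := card_finRing_nat F.
rewrite -{1}(prednK (ltnW (card_finNzRing_gt1 F))) mulrSr => /eqP.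
by rewrite addr_eq0 => /eqP.
Qed.

Lemma root_of_unity_unit (T : unitRingType) (m : nat) (x : T) :
  (0 < m)%N -> x ^+ m = 1 -> x \is a GRing.unit.
Proof. by move=> m_gt0 xm; rewrite -(unitrX_pos x m_gt0) xm unitr1. Qed.

Section Teichmuller.

Variables (k : fieldType) (S : comUnitRingType) (piS : {rmorphism S -> k}).
Variable n : nat.
Hypothesis locS : local_residue piS.
Hypothesis n_unit : (n%:R : k) != 0.

Lemma order_gt0 : (0 < n)%N.
Proof. by rewrite lt0n; apply: contraNneq n_unit => ->. Qed.

Lemma residue_unit_neq0 (x : S) : x \is a GRing.unit -> piS x != 0.
Proof. by move=> ux; rewrite -unitfE rmorph_unit. Qed.

(* An n-th root of unity with residue 1 is 1: since u - 1 kills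
   1 + u + ... + u^(n-1), whose residue n is a unit. *)
Lemma root_of_unity_residue1 (u : S) : u ^+ n = 1 -> piS u = 1 -> u = 1.
Proof.
move=> un pu.
have geo_unit : \sum_(i < n) u ^+ i \is a GRing.unit.
  apply: locS.2; rewrite rmorph_sum.
  under eq_bigr do rewrite rmorphXn pu expr1n.
  by rewrite sumr_const card_ord.
have : (u - 1) * \sum_(i < n) u ^+ i = 0 by rewrite -subrX1 un subrr.
by move/(canRL (mulrK geo_unit)); rewrite mul0r => /eqP; rewrite subr_eq0 => /eqP.
Qed.

Lemma teichmuller_unique (x y : S) :
  x ^+ n = 1 -> y ^+ n = 1 -> piS x = piS y -> x = y.
Proof.
move=> xn yn pxy; have ux := root_of_unity_unit order_gt0 xn.
suff : y / x = 1 by move/(canRL (divrK ux)); rewrite mul1r.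
apply: root_of_unity_residue1.
  by rewrite exprMn exprVn xn yn invr1 mulr1.
by rewrite rmorphM rmorphV // -pxy divff // residue_unit_neq0.
Qed.

End Teichmuller.

Section Diag2.

Variable T : comUnitRingType.
Implicit Types (a b c d x y : T) (A B N : 'M[T]_2).

Lemma ord2P (i : 'I_2) : i = 0 \/ i = 1.
Proof. by case: i => [[|[|//]] hi]; [left|right]; exact/val_inj. Qed.

Lemma mx2P (U : Type) (A B : 'M[U]_2) :
  A 0 0 = B 0 0 -> A 0 1 = B 0 1 -> A 1 0 = B 1 0 -> A 1 1 = B 1 1 -> A = B.
Proof.
move=> e00 e01 e10 e11; apply/matrixP => i j.
by case: (ord2P i) => ->; case: (ord2P j) => ->.
Qed.

Lemma mulmx2E A B i j : (A *m B) i j = A i 0 * B 0 j + A i 1 * B 1 j.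
Proof.
by rewrite mxE big_ord_recl big_ord1; congr (_ + A i _ * B _ j); apply: val_inj.
Qed.

Lemma diag2_mul a b c d : diag2 a b *m diag2 c d = diag2 (a * c) (b * d).
Proof. by apply: mx2P; rewrite !mulmx2E !mxE /= ?mul0r ?mulr0 ?addr0 ?add0r. Qed.

Lemma diag2_1 : diag2 (1 : T) 1 = 1%:M.
Proof. by apply: mx2P; rewrite !mxE. Qed.

Lemma diag2_scalar a : diag2 a a = a%:M.
Proof. by apply: mx2P; rewrite !mxE. Qed.

Lemma diag2_add a b c d : diag2 a b + diag2 c d = diag2 (a + c) (b + d).
Proof. by apply: mx2P; rewrite !mxE ?addr0. Qed.

Lemma diag2_scale s a b : s *: diag2 a b = diag2 (s * a) (s * b).
Proof. by apply: mx2P; rewrite !mxE ?mulr0. Qed.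

Lemma diag2_exp a b j : diag2 a b ^+ j = diag2 (a ^+ j) (b ^+ j).
Proof.
elim: j => [|j IHj]; first by rewrite !expr0 diag2_1.
by rewrite exprS IHj -mulmxE diag2_mul -!exprS.
Qed.

Lemma diag2_sum m (f g : 'I_m -> T) :
  \sum_(i < m) diag2 (f i) (g i) = diag2 (\sum_(i < m) f i) (\sum_(i < m) g i).
Proof.
elim: m f g => [|m IHm] f g; first by rewrite !big_ord0; apply: mx2P; rewrite !mxE.
by rewrite !big_ord_recr /= IHm diag2_add.
Qed.

Lemma diag2_inj a b c d : diag2 a b = diag2 c d -> a = c /\ b = d.
Proof.
move=> e; have entry i j : diag2 a b i j = diag2 c d i j by rewrite e.
by have := entry 0 0; have := entry 1 1; rewrite !mxE.
Qed.

Lemma det_diag2 a b : \det (diag2 a b) = a * b.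
Proof.
rewrite (expand_det_row _ 0) big_ord_recl big_ord1 /cofactor !mxE /= mul0r addr0.
by rewrite expr0 mul1r det_mx11 !mxE.
Qed.

Lemma SL2_diag2 a : a \is a GRing.unit -> SL2 (diag2 a a^-1).
Proof. by move=> ua; rewrite /SL2 det_diag2 mulrV. Qed.

Lemma comm_diag2 N c d :
  d - c \is a GRing.unit -> N *m diag2 c d = diag2 c d *m N ->
  N = diag2 (N 0 0) (N 1 1).
Proof.
move=> u comm.
have entry i j : (N *m diag2 c d) i j = (diag2 c d *m N) i j by rewrite comm.
have [e01 e10] := (entry 0 1, entry 1 0).
rewrite !mulmx2E !mxE /= !mulr0 !mul0r !add0r !addr0 in e01 e10.
have cancel x : x * (d - c) = 0 -> x = 0 by move=> h; rewrite -(mulrK u x) h mul0r.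
apply: mx2P; rewrite !mxE //=; apply: cancel.
  by rewrite mulrBr e01 mulrC subrr.
by rewrite mulrBr e10 mulrC subrr.
Qed.

End Diag2.

Lemma map_diag2 (T U : comUnitRingType) (f : {rmorphism T -> U}) (a b : T) :
  map_mx f (diag2 a b) = diag2 (f a) (f b).
Proof. by apply: mx2P; rewrite !mxE ?rmorph0. Qed.

Section IdealPowers.

Variables (R : comUnitRingType) (I : R -> Prop).
Hypothesis I_mul : forall r x, I x -> I (r * x).

Lemma ideal_pow0 m : ideal_pow I m 0.
Proof. by case: m => //= m; exists [::]; rewrite big_nil. Qed.

Lemma ideal_powD m x y :
  ideal_pow I m x -> ideal_pow I m y -> ideal_pow I m (x + y).
Proof.
case: m => //= m [s [sI ->]] [t [tI ->]]; exists (s ++ t); split; last by rewrite big_cat.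
by move=> p; rewrite mem_cat => /orP [/sI|/tI].
Qed.

Lemma ideal_powM m r x : ideal_pow I m x -> ideal_pow I m (r * x).
Proof.
case: m => //= m [s [sI ->]]; exists [seq (r * p.1, p.2) | p <- s]; split.
  by move=> p /mapP [q /sI [q1 q2] ->]; split => //; apply: I_mul.
by rewrite big_map mulr_sumr; apply: eq_bigr => p _; rewrite mulrA.
Qed.

Lemma ideal_pow_sum m l (f : 'I_l -> R) :
  (forall i, ideal_pow I m (f i)) -> ideal_pow I m (\sum_(i < l) f i).
Proof.
by move=> fI; apply: (big_ind (ideal_pow I m)) => //;
  [apply: ideal_pow0 | apply: ideal_powD].
Qed.

(* Conjugation preserves the principal congruence subgroups: if X = 1 mod J
   then C X C^-1 - 1 = C (X - 1) C^-1 has entries in the ideal J. *)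
Lemma congr_id_conj m (C D X : 'M[R]_2) :
  C *m D = 1%:M -> congr_id (ideal_pow I m) X ->
  congr_id (ideal_pow I m) (C *m X *m D).
Proof.
move=> CD X1 i j.
have -> : C *m X *m D = C *m (X - 1%:M) *m D + 1%:M.
  by rewrite mulmxBr mulmxBl mulmx1 CD subrK.
rewrite [X in X - _]mxE addrK mxE; apply: ideal_pow_sum => l.
rewrite mulrC; apply: ideal_powM; rewrite mxE; apply: ideal_pow_sum => l'.
by apply: ideal_powM; have := X1 l' l; rewrite !mxE.
Qed.

End IdealPowers.

Lemma maxid_mul (k : fieldType) (S : comUnitRingType) (piS : {rmorphism S -> k})
    (r x : S) :
  maxid piS x -> maxid piS (r * x).
Proof. by rewrite /maxid rmorphM => ->; rewrite mulr0. Qed.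

Section EigenProjector.

Variables (k : fieldType) (S : comUnitRingType) (piS : {rmorphism S -> k}).
Variable n : nat.
Hypothesis locS : local_residue piS.
Hypothesis n_unit : (n%:R : k) != 0.

(* n times the projector onto the s-eigenspace of a matrix M with M^n = 1. *)
Definition eigensum (M : 'M[S]_2) (s : S) : 'M[S]_2 := \sum_(j < n) (s^-1 *: M) ^+ j.

(* The columns of eigensum M s are s-eigenvectors of M, because
   (s^-1 M - 1) kills 1 + s^-1 M + ... + (s^-1 M)^(n-1). *)
Lemma eigensumP (M : 'M[S]_2) (s : S) :
  s \is a GRing.unit -> s ^+ n = 1 -> M ^+ n = 1 ->
  M *m eigensum M s = s *: eigensum M s.
Proof.
move=> us sn Mn; set N := s^-1 *: M.
have Nn : N ^+ n = 1 by rewrite /N exprZn Mn exprVn sn invr1 scale1r.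
have : (N - 1) * eigensum M s = 0 by rewrite /eigensum -subrX1 Nn subrr.
rewrite mulrBl mul1r => /eqP; rewrite subr_eq0 => /eqP NE.
by rewrite -{2}NE /N -scalerAl scalerA divrr // scale1r mulmxE.
Qed.

Lemma eigensum_residue (M : 'M[S]_2) (s : S) (x y : k) :
  map_mx piS M = diag2 x y ->
  map_mx piS (eigensum M s) =
    diag2 (\sum_(j < n) (piS s^-1 * x) ^+ j) (\sum_(j < n) (piS s^-1 * y) ^+ j).
Proof.
move=> Mres; rewrite /eigensum map_mx_sum -diag2_sum; apply: eq_bigr => j _.
by rewrite rmorphXn /= map_mxZ Mres diag2_scale diag2_exp.
Qed.

(* Lifting an eigenbasis: if M^n = 1 and M reduces to diag(b_bar, c_bar) with
   b, c n-th roots of unity, some P = 1 mod m_S satisfies M P = P diag(b, c);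
   take P = (1/n) (E_b diag(1,0) + E_c diag(0,1)) with E_s = eigensum M s. *)
Lemma lift_eigenbasis (M : 'M[S]_2) (b c : S) :
  b ^+ n = 1 -> c ^+ n = 1 -> M ^+ n = 1 ->
  map_mx piS M = diag2 (piS b) (piS c) ->
  exists P : 'M[S]_2, map_mx piS P = 1%:M /\ M *m P = P *m diag2 b c.
Proof.
move=> bn cn Mn Mres.
have [ub uc] := (root_of_unity_unit (order_gt0 n_unit) bn,
                 root_of_unity_unit (order_gt0 n_unit) cn).
have un : (n%:R : S) \is a GRing.unit by apply: locS.2; rewrite rmorph_nat.
have [pb pc] := (residue_unit_neq0 piS ub, residue_unit_neq0 piS uc).
exists ((n%:R : S)^-1 *: (eigensum M b *m diag2 1 0 + eigensum M c *m diag2 0 1)).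
split.
  rewrite map_mxZ map_mxD !map_mxM !(eigensum_residue _ Mres) !map_diag2.
  rewrite !diag2_mul !rmorph1 !rmorph0 !mulr1 !mulr0 diag2_add addr0 add0r.
  rewrite !rmorphV // !mulVf //.
  under eq_bigr do rewrite expr1n.
  by rewrite !sumr_const card_ord diag2_scale rmorph_nat mulVf // diag2_1.
rewrite -scalemxAr -scalemxAl; congr (_ *: _).
rewrite mulmxDr mulmxDl !mulmxA !eigensumP // -!mulmxA !diag2_mul.
by rewrite -!scalemxAl !scalemxAr !diag2_scale !mulr1 !mul1r !mulr0 !mul0r.
Qed.

End EigenProjector.

Lemma diag2_teichmuller (k : fieldType) (S : comUnitRingType)
    (piS : {rmorphism S -> k}) (n : nat) (x y b c : S) :
  local_residue piS -> (n%:R : k) != 0 ->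
  diag2 x y ^+ n = 1 -> b ^+ n = 1 -> c ^+ n = 1 ->
  map_mx piS (diag2 x y) = diag2 (piS b) (piS c) -> diag2 x y = diag2 b c.
Proof.
move=> locS n_unit Dn bn cn /[!map_diag2] /diag2_inj [pxb pyc].
have [xn yn] : x ^+ n = 1 /\ y ^+ n = 1.
  by apply: diag2_inj; rewrite -diag2_exp Dn diag2_1 idmxE.
by rewrite (teichmuller_unique locS n_unit xn bn pxb) (teichmuller_unique locS n_unit yn cn pyc).
Qed.

Section Conjugation.

Variables (T : comUnitRingType) (m : nat) (C P : 'M[T]_m.+1).
Hypothesis PC : P *m C = 1%:M.

Lemma conj_mul (X Y : 'M[T]_m.+1) :
  (C *m X *m P) *m (C *m Y *m P) = C *m (X *m Y) *m P.
Proof. by rewrite !mulmxA -[C *m X *m P *m C]mulmxA PC mulmx1. Qed.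

Lemma conj_exp (X : 'M[T]_m.+1) j : (C *m X *m P) ^+ j = C *m X ^+ j *m P.
Proof.
elim: j => [|j IHj]; first by rewrite !expr0 mulmx1 (mulmx1C PC).
by rewrite !exprSr IHj -!mulmxE conj_mul.
Qed.

End Conjugation.

Lemma residue1_unitmx (k : fieldType) (S : comUnitRingType)
    (piS : {rmorphism S -> k}) (P : 'M[S]_2) :
  local_residue piS -> map_mx piS P = 1%:M -> P \in unitmx.
Proof.
move=> [_ locS] P1; rewrite unitmxE; apply: locS.
by rewrite -det_map_mx P1 det1 oner_eq0.
Qed.

Section Lifts.

Variables (k : finFieldType) (R S : comUnitRingType).
Variables (piR : {rmorphism R -> k}) (piS : {rmorphism S -> k}).
Variable rho : 'M[R]_2 -> 'M[S]_2.
Hypothesis rho_lift : is_lift piR piS rho.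

Lemma conj_lift (C : 'M[S]_2) :
  C \in unitmx -> map_mx piS C = 1%:M ->
  is_lift piR piS (fun A => C *m rho A *m invmx C) /\
  strictly_equiv piS rho (fun A => C *m rho A *m invmx C).
Proof.
move: rho_lift => [rho_mul [rho_unit [rho_res rho_cont]]] uC C1.
have invC1 : map_mx piS (invmx C) = 1%:M.
  by rewrite -[LHS]mul1mx -C1 -map_mxM mulmxV // map_mx1.
split; last first.
  exists C; split => // i j; rewrite /maxid rmorphB.
  have := congr1 (fun M : 'M[k]_2 => M i j) C1; rewrite !mxE => ->.
  by rewrite rmorph_nat subrr.
split; first by move=> A B SA SB; rewrite rho_mul // conj_mul // mulVmx.
split; first by move=> A SA; rewrite !unitmx_mul uC rho_unit // unitmx_inv uC.
split; first by move=> A SA; rewrite !map_mxM invC1 C1 mul1mx mulmx1 rho_res.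
move=> l; have [N rhoN] := rho_cont l; exists N => A SA A1.
by apply: congr_id_conj; [apply: maxid_mul | rewrite mulmxV | apply: rhoN].
Qed.

Lemma lift1 : rho 1%:M = 1%:M.
Proof.
move: rho_lift => [rho_mul [rho_unit _]].
have SL1 : SL2 (1%:M : 'M[R]_2) by rewrite /SL2 det1.
have := rho_mul _ _ SL1 SL1; rewrite mulmx1 => e.
by rewrite -[LHS]mulmx1 -(mulmxV (rho_unit _ SL1)) mulmxA -e.
Qed.

Lemma lift_torus_mul (a a' : R) :
  a \is a GRing.unit -> a' \is a GRing.unit ->
  rho (diag2 a a^-1) *m rho (diag2 a' a'^-1) = rho (diag2 (a * a') (a * a')^-1).
Proof.
move: rho_lift => [rho_mul _] ua ua'.
rewrite -rho_mul ?diag2_mul ?invrM // ?[a'^-1 * _]mulrC //; exact: SL2_diag2.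
Qed.

Lemma lift_torus_comm (a a' : R) :
  a \is a GRing.unit -> a' \is a GRing.unit ->
  rho (diag2 a a^-1) *m rho (diag2 a' a'^-1) = rho (diag2 a' a'^-1) *m rho (diag2 a a^-1).
Proof. by move=> ua ua'; rewrite !lift_torus_mul // mulrC. Qed.

Lemma lift_torus_exp (a : R) j :
  a \is a GRing.unit -> rho (diag2 a a^-1) ^+ j = rho (diag2 (a ^+ j) (a ^+ j)^-1).
Proof.
move=> ua; elim: j => [|j IHj]; first by rewrite !expr0 invr1 diag2_1 lift1.
by rewrite exprSr IHj -mulmxE lift_torus_mul ?unitrX // -exprSr.
Qed.

Lemma lift_torus_residue (a : R) :
  a \is a GRing.unit -> map_mx piS (rho (diag2 a a^-1)) = diag2 (piR a) (piR a)^-1.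
Proof.
move: rho_lift => [_ [_ [rho_res _]]] ua.
by rewrite rho_res ?map_diag2 ?rmorphV //; exact: SL2_diag2.
Qed.

End Lifts.

Section TorusNormalization.

Variables (k : finFieldType) (R S : comUnitRingType).
Variables (piR : {rmorphism R -> k}) (piS : {rmorphism S -> k}).
Variable rho : 'M[R]_2 -> 'M[S]_2.
Hypothesis rho_lift : is_lift piR piS rho.
Hypothesis locS : local_residue piS.
Variable n : nat.
Hypothesis n_unit : (n%:R : k) != 0.

Definition matching (a : R) (b : S) : Prop := [/\ a ^+ n = 1, b ^+ n = 1 & piS b = piR a].

Let n_gt0 : (0 < n)%N := order_gt0 n_unit.

Lemma matching_units (a : R) (b : S) :
  matching a b -> [/\ a \is a GRing.unit, b \is a GRing.unit & b^-1 ^+ n = 1].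
Proof.
case=> an bn _; split; [exact: root_of_unity_unit an | exact: root_of_unity_unit bn |].
by rewrite exprVn bn invr1.
Qed.

Lemma lift_torus_root (a : R) : a ^+ n = 1 -> rho (diag2 a a^-1) ^+ n = 1.
Proof.
move=> an; rewrite (lift_torus_exp rho_lift) ?(root_of_unity_unit n_gt0 an) //.
by rewrite an invr1 diag2_1 (lift1 rho_lift).
Qed.

Lemma matching_torus_residue (a : R) (b : S) :
  matching a b -> map_mx piS (rho (diag2 a a^-1)) = diag2 (piS b) (piS b^-1).
Proof.
move=> mab; have [ua ub _] := matching_units mab; case: mab => _ _ pba.
by rewrite (lift_torus_residue rho_lift ua) rmorphV // pba.
Qed.

Lemma torus_eigenbasis (a : R) (b : S) :
  matching a b ->
  exists P : 'M[S]_2, map_mx piS P = 1%:M /\ rho (diag2 a a^-1) *m P = P *m diag2 b b^-1.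
Proof.
move=> mab; have [_ _ bVn] := matching_units mab; case: (mab) => an bn _.
apply: (lift_eigenbasis locS n_unit bn bVn (lift_torus_root an)).
exact: matching_torus_residue.
Qed.

(* If b_bar = b_bar^-1 then b = b^-1, and rho(t(a)), being conjugate to the
   scalar b, equals diag(b, b^-1) already. *)
Lemma torus_scalar (a : R) (b : S) :
  matching a b -> piS b = piS b^-1 -> rho (diag2 a a^-1) = diag2 b b^-1.
Proof.
move=> mab bb; have [_ _ bVn] := matching_units mab; case: (mab) => _ bn _.
have [P [P1 MP]] := torus_eigenbasis mab.
have uP := residue1_unitmx locS P1.
rewrite -(teichmuller_unique locS n_unit bn bVn bb) diag2_scalar in MP *.
by rewrite -[LHS]mulmx1 -(mulmxV uP) mulmxA MP scalar_mxC -mulmxA mulmxV // mulmx1.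
Qed.

(* If b0_bar <> b0_bar^-1, conjugating by the inverse of the eigenbasis P0
   of rho(t(a0)) puts every rho(t(a)) in the normal form diag(b, b^-1):
   it commutes with diag(b0, b0^-1), hence is diagonal, and its diagonal
   entries are roots of unity with the residues of b and b^-1. *)
Lemma torus_regular (a0 : R) (b0 : S) :
  matching a0 b0 -> piS b0 != piS b0^-1 ->
  exists C : 'M[S]_2, [/\ C \in unitmx, map_mx piS C = 1%:M &
    forall a b, matching a b -> C *m rho (diag2 a a^-1) *m invmx C = diag2 b b^-1].
Proof.
move=> mab0 b0_reg; have [ua0 _ _] := matching_units mab0.
have [P0 [P01 MP0]] := torus_eigenbasis mab0.
have uP0 := residue1_unitmx locS P01.
have P0C : P0 *m invmx P0 = 1%:M by rewrite mulmxV.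
have invP01 : map_mx piS (invmx P0) = 1%:M.
  by rewrite -[LHS]mulmx1 -P01 -map_mxM mulVmx // map_mx1.
exists (invmx P0); split => //; first by rewrite unitmx_inv.
move=> a b mab; have [ua _ bVn] := matching_units mab; case: (mab) => an bn _.
rewrite invmxK; set N := invmx P0 *m rho (diag2 a a^-1) *m P0.
have D0 : invmx P0 *m rho (diag2 a0 a0^-1) *m P0 = diag2 b0 b0^-1.
  by rewrite -mulmxA MP0 mulmxA mulVmx // mul1mx.
have N_comm : N *m diag2 b0 b0^-1 = diag2 b0 b0^-1 *m N.
  by rewrite -D0 /N !conj_mul // (lift_torus_comm rho_lift).
have reg_unit : b0^-1 - b0 \is a GRing.unit.
  by apply: locS.2; rewrite rmorphB subr_eq0 eq_sym.
rewrite (comm_diag2 reg_unit N_comm); apply: (diag2_teichmuller locS n_unit) => //.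
  by rewrite -(comm_diag2 reg_unit N_comm) /N conj_exp // lift_torus_root // mulmx1 mulVmx.
by rewrite -(comm_diag2 reg_unit N_comm) /N !map_mxM (matching_torus_residue mab) P01 invP01
  mul1mx mulmx1.
Qed.

Lemma torus_normalizer :
  exists C : 'M[S]_2, [/\ C \in unitmx, map_mx piS C = 1%:M &
    forall a b, matching a b -> C *m rho (diag2 a a^-1) *m invmx C = diag2 b b^-1].
Proof.
case: (classic (exists a0 b0, matching a0 b0 /\ piS b0 != piS b0^-1)).
  by move=> [a0 [b0 [mab0 b0_reg]]]; apply: (torus_regular mab0 b0_reg).
move=> no_reg; exists 1%:M; split; [exact: unitmx1 | exact: map_mx1 |].
move=> a b mab; rewrite invmx1 mul1mx mulmx1; apply: torus_scalar => //.
by apply: contra_not_eq no_reg => b_reg; exists a, b.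
Qed.

End TorusNormalization.

Unset Implicit Arguments. Set Strict Implicit.

Theorem mainTheorem18 (k : finFieldType)
  (R : comUnitRingType) (piR : {rmorphism R -> k})
  (S : comUnitRingType) (piS : {rmorphism S -> k}) :
  in_hatC piR -> in_hatC piS ->
  forall rho : 'M[R]_2 -> 'M[S]_2, is_lift piR piS rho ->
  exists rho' : 'M[R]_2 -> 'M[S]_2,
    is_lift piR piS rho' /\ strictly_equiv piS rho rho' /\
    (forall (a : R) (b : S), mu #|k| a -> mu #|k| b -> piS b = piR a ->
       rho' (diag2 a a^-1) = diag2 b b^-1).
Proof.
move=> _ [locS _] rho rho_lift.
have n_unit : ((#|k|.-1)%:R : k) != 0.
  by rewrite card_pred_finRing_nat oppr_eq0 oner_eq0.
have [C [uC C1 C_torus]] := torus_normalizer rho_lift locS n_unit.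
have [C_lift C_equiv] := conj_lift rho_lift uC C1.
exists (fun A => C *m rho A *m invmx C); split => //; split => //.
by move=> a b an bn pba; apply: C_torus; split.
Qed.
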